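(* With $Y$, $Y^+$, $X$, $\Delta^+$ as in the context, one has $\gamma_{Y^+/X}(1)=-p\,N_{\Delta^+}\in\mathbb{Z}[\Delta^+]$, where $N_{\Delta^+}=\sum_{\sigma\in\Delta^+}\sigma$.
   Context: Let $p$ be an odd prime, $\Delta=\mathrm{Gal}(\mathbb{Q}(\zeta_p)/\mathbb{Q})$, $\sigma_i:\zeta_p\mapsto\zeta_p^i$, $j=\sigma_{-1}$, $\Delta^+=\Delta/\langle j\rangle$. Digraphs have incidence $e\mapsto(o(e),t(e))$; derived digraph $X(G,\alpha)$ of $\alpha:E_X\to G$ has vertices $V_X\times G$, edges $E_X\times G$, $o(e,\sigma)=(o(e),\sigma)$, $t(e,\sigma)=(t(e),\sigma\alpha(e))$, and $G$ acts by left multiplication on the second coordinate. $X$ is the bouquet (one vertex) with $\frac{p-1}{2}p+1$ loops $e_0$, $e_{i,k}$ ($1\le k\le i\le p-1$), $\alpha(e_0)=\sigma_1$, $\alpha(e_{i,k})=\sigma_i^{-1}$, $Y=X(\Delta,\alpha)$, and $Y^+=Y_{\langle j\rangle}$ the quotient digraph by $\langle j\rangle$, on which $\Delta^+$ acts freely on vertices with quotient $X$. For a finite abelian group $K$ acting on a finite digraph $W$ freely on vertices, $\gamma_{W/W_K}(u)=\det_{\mathbb{Z}[K][u]}(\mathcal{I}-\mathcal{A}_Wu)$ on the free $\mathbb{Z}[K][u]$-module $\mathbb{Z}V_W[u]$, where $\mathcal{A}_W(w)=\sum_{o(\varepsilon)=w}t(\varepsilon)$. *)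

From HB Require Import structures.
From mathcomp Require Import all_boot all_order all_algebra all_fingroup.
Set Implicit Arguments. Unset Strict Implicit. Unset Printing Implicit Defensive.
Import GRing.Theory FinRing.Theory.
Set Implicit Arguments. Unset Strict Implicit. Unset Printing Implicit Defensive.
Import GRing.Theory FinRing.Theory.
Local Open Scope ring_scope.

Definition grpring (K : finGroupType) (cK : forall x y : K, (x * y = y * x)%g)
  := {ffun K -> int}.

Section GroupRing.
Variables (K : finGroupType) (cK : forall x y : K, (x * y = y * x)%g).
Local Notation grpring := (grpring cK).
HB.instance Definition _ := GRing.Zmodule.on grpring.

Definition gr_one : grpring := [ffun g => ((g == 1%g) : nat)%:Z].
Definition gr_mul (a b : grpring) : grpring :=
  [ffun g => \sum_(h : K) a h * b (h^-1 * g)%g].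

Lemma gr_mulA : associative gr_mul.
Proof.
move=> a b c; apply/ffunP=> g; rewrite !ffunE.
under eq_bigr => h _ do rewrite ffunE big_distrr /=.
under [RHS]eq_bigr => h _ do rewrite ffunE big_distrl /=.
rewrite [RHS]exchange_big /=; apply: eq_bigr => i _.
rewrite [RHS](reindex_inj (mulgI i)) /=; apply: eq_bigr => m _.
by rewrite mulrA mulKg invMg mulgA.
Qed.

Lemma gr_mulC : commutative gr_mul.
Proof.
move=> a b; apply/ffunP=> g; rewrite !ffunE.
have inj : injective (fun h : K => (h^-1 * g)%g).
  by move=> x y /mulIg /invg_inj.
rewrite (reindex_inj inj) /=; apply: eq_bigr => h _.
by rewrite mulrC invMg invgK -mulgA (cK h g) mulKg.
Qed.

Lemma gr_mul1 : left_id gr_one gr_mul.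
Proof.
move=> a; apply/ffunP=> g; rewrite ffunE (bigD1 1%g) //= big1 ?addr0.
  by rewrite ffunE eqxx mul1r invg1 mul1g.
by move=> h /negbTE nh; rewrite ffunE nh mul0r.
Qed.

Lemma gr_mulDl : left_distributive gr_mul +%R.
Proof.
move=> a b c; apply/ffunP=> g; rewrite !ffunE -big_split /=.
by apply: eq_bigr => h _; rewrite ffunE mulrDl.
Qed.

Lemma gr_one_neq0 : gr_one != 0.
Proof. by apply/eqP => /ffunP /(_ 1%g); rewrite !ffunE eqxx. Qed.

HB.instance Definition _ := GRing.Zmodule_isComNzRing.Build (grpring)
  gr_mulA gr_mulC gr_mul1 gr_mulDl gr_one_neq0.

Definition grelt (x : K) : grpring := [ffun g => ((g == x) : nat)%:Z].

Definition grnorm : grpring := \sum_(x : K) grelt x.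

End GroupRing.

(* gamma_{W/W_K}(u) for a finite digraph W = (V, E, o, t) with an      *)
(* action act of the finite abelian group K on V, free on vertices.    *)
(* Z V_W is a free Z[K]-module with basis a set of orbit               *)
(* representatives rep_1..rep_n; writing                               *)
(*    A_W(rep_i) = sum_{o(e)=rep_i} t(e) = sum_j M_ij rep_j,           *)
(* with M_ij = sum_{o(e)=rep_i, t(e) in K.rep_j} [g_e], g_e.rep_j=t(e), *)
(* gamma(u) = det_{Z[K][u]} (I - A_W u) = det (1 - u M).               *)
Section Gamma.
Variables (K : finGroupType) (cK : forall x y : K, (x * y = y * x)%g).
Variables (V E : finType) (o t : E -> V) (act : K -> V -> V).

Definition vorbit (v : V) : {set V} := [set act k v | k : K].
Definition orbit_rep (v : V) : V := odflt v [pick w in vorbit v].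
Definition reps : seq V := [seq v <- enum V | orbit_rep v == v].
Definition rep (i : 'I_(size reps)) : V := tnth (in_tuple reps) i.
(* the (unique, by freeness) k in K with act k w = v *)
Definition coef (v w : V) : K := odflt 1%g [pick k | act k w == v].

Definition adj_mx : 'M[grpring cK]_(size reps) :=
  \matrix_(i, j) \sum_(e : E | (o e == rep i) && (t e \in vorbit (rep j)))
                    grelt cK (coef (t e) (rep j)).

Definition gamma : {poly grpring cK} :=
  \det (1%:M - 'X *: map_mx polyC adj_mx).
End Gamma.

Section Derived.
Variables (VX EX : finType) (oX tX : EX -> VX) (G : finGroupType).
Variable alpha : EX -> G.
Definition der_o (x : EX * G) : VX * G := (oX x.1, x.2).
Definition der_t (x : EX * G) : VX * G := (tX x.1, x.2 * alpha x.1)%g.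
Definition der_actV (s : G) (v : VX * G) : VX * G := (v.1, s * v.2)%g.
Definition der_actE (s : G) (x : EX * G) : EX * G := (x.1, s * x.2)%g.
End Derived.

Section Quotient.
Variables (G : finGroupType) (H : {group G}).
Variables (V E : finType) (o t : E -> V).
Variables (actV : G -> V -> V) (actE : G -> E -> E).

Definition horb (T : finType) (act : G -> T -> T) (x : T) : {set T} :=
  [set act h x | h in H].

Definition qV := {S : {set V} | [exists v, S == horb actV v]}.
Definition qE := {S : {set E} | [exists e, S == horb actE e]}.

Lemma qV_of_proof (v : V) : [exists w, horb actV v == horb actV w].
Proof. by apply/existsP; exists v. Qed.
Definition qV_of (v : V) : qV := exist _ (horb actV v) (qV_of_proof v).
Definition qV_rep (S : qV) : V := xchoose (elimT existsP (valP S)).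
Definition qE_rep (C : qE) : E := xchoose (elimT existsP (valP C)).

Definition q_o (C : qE) : qV := qV_of (o (qE_rep C)).
Definition q_t (C : qE) : qV := qV_of (t (qE_rep C)).

Definition q_actV (c : coset_of H) (S : qV) : qV :=
  qV_of (actV (repr c) (qV_rep S)).
End Quotient.

(* The specific data.  Delta = Gal(Q(zeta_p)/Q) is identified with     *)
(* (Z/pZ)^x = {unit 'F_p} via sigma_i <-> i.                           *)
Definition Delta (p : nat) := {unit 'F_p}.
Definition sigma (p i : nat) : Delta p := insubd (1%g : Delta p) (i%:R : 'F_p).
(* j = sigma_{-1} = sigma_{p-1} *)
Definition jconj (p : nat) : Delta p := sigma p p.-1.
Definition Jgrp (p : nat) : {group Delta p} := <[jconj p]>%G.
Definition DeltaPlus (p : nat) := coset_of (Jgrp p).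

Lemma DeltaPlus_comm (p : nat) : forall x y : DeltaPlus p, (x * y = y * x)%g.
Proof.
move=> x y; case: (cosetP x) => a Na ->; case: (cosetP y) => b Nb ->.
rewrite -!morphM //; congr coset; apply: val_inj; rewrite !val_unitM.
exact: mulrC.
Qed.

(* The bouquet X: one vertex, loops e_0 (= None) and e_{i,k}, 1 <= k <= i <= p-1 *)
Definition XV := unit.
Definition XE (p : nat) := option {ik : 'I_p * 'I_p | (0 < ik.2)%N && (ik.2 <= ik.1)%N}.
Definition XoT (p : nat) (e : XE p) : XV := tt.
Definition alphaX (p : nat) (e : XE p) : Delta p :=
  match e with
  | None => sigma p 1
  | Some ik => ((sigma p (val ik).1)^-1)%g
  end.

Definition YV (p : nat) := (XV * Delta p)%type.
Definition YE (p : nat) := (XE p * Delta p)%type.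
Definition Y_o (p : nat) : YE p -> YV p := @der_o _ _ (@XoT p) (Delta p).
Definition Y_t (p : nat) : YE p -> YV p := @der_t _ _ (@XoT p) (Delta p) (@alphaX p).
Definition Y_actV (p : nat) : Delta p -> YV p -> YV p := @der_actV XV (Delta p).
Definition Y_actE (p : nat) : Delta p -> YE p -> YE p := @der_actE (XE p) (Delta p).

Definition YplusV (p : nat) := qV (Jgrp p) (@Y_actV p).
Definition YplusE (p : nat) := qE (Jgrp p) (@Y_actE p).
Definition Yplus_o (p : nat) : YplusE p -> YplusV p :=
  @q_o _ (Jgrp p) _ _ (@Y_o p) (@Y_actV p) (@Y_actE p).
Definition Yplus_t (p : nat) : YplusE p -> YplusV p :=
  @q_t _ (Jgrp p) _ _ (@Y_t p) (@Y_actV p) (@Y_actE p).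
Definition Yplus_act (p : nat) : DeltaPlus p -> YplusV p -> YplusV p :=
  @q_actV _ (Jgrp p) _ (@Y_actV p).

Definition gamma_YplusX (p : nat) : {poly grpring (@DeltaPlus_comm p)} :=
  gamma (@DeltaPlus_comm p) (@Yplus_o p) (@Yplus_t p) (@Yplus_act p).

From HB Require Import structures.
From mathcomp Require Import all_boot all_order all_algebra all_fingroup.
From mathcomp Require Import cyclic zify.
Set Implicit Arguments. Unset Strict Implicit. Unset Printing Implicit Defensive.
Import GRing.Theory Num.Theory.
Local Open Scope ring_scope.

(* Delta^+ acts simply transitively on the vertices of Y^+, so gamma_{Y^+/X}
   is a 1x1 determinant and gamma(1) = 1 - sum_e [alpha(e) mod j], the sum
   running over the loops of the bouquet X.  The loop e_0 contributes [1] and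
   sigma_i^-1 is hit by the i loops e_{i,k}.  As sigma_(p-i) = sigma_i j, pairing
   i with p - i gives every class of Delta^+ the weight i + (p - i) = p, so the
   sum is 1 + p N. *)

Lemma det_dim1 (R : comNzRingType) n (A : 'M[R]_n) (i : 'I_n) :
  n = 1%N -> \det A = A i i.
Proof. by move=> n1; move: A i; rewrite n1 => A i; rewrite det_mx11 (ord1 i). Qed.

Section GammaTransitive.
Variables (K : finGroupType) (cK : forall x y : K, (x * y = y * x)%g).
Variables (V E : finType) (o t : E -> V) (act : K -> V -> V).

Lemma coef_free :
  (forall k k' v, act k v = act k' v -> k = k') ->
  forall k v, coef act (act k v) v = k.
Proof.
move=> act_free k v; rewrite /coef.
by case: pickP => [k' /eqP/act_free // | /(_ k)]; rewrite eqxx.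
Qed.

Hypothesis act_transitive : forall v w, exists k, act k v = w.

Lemma vorbitT v : vorbit act v = setT.
Proof.
apply/setP => w; rewrite inE; have [k <-] := act_transitive v w.
by apply/imsetP; exists k.
Qed.

Lemma reps_transitive v : reps act = [:: orbit_rep act v].
Proof.
have orbit_rep_const w : orbit_rep act w = orbit_rep act v.
  by rewrite /orbit_rep !vorbitT; case: pickP => // /(_ v); rewrite inE.
rewrite /reps (eq_filter (a2 := pred1 (orbit_rep act v))); last first.
  by move=> w; rewrite /= orbit_rep_const eq_sym.
by rewrite filter_pred1_uniq ?enum_uniq ?mem_enum.
Qed.

Lemma gamma_horner1_transitive v (u := orbit_rep act v) :
  (gamma cK o t act).[1] = 1 - \sum_(e | o e == u) grelt cK (coef act (t e) u).
Proof.
have size_reps : size (reps act) = 1%N by rewrite (reps_transitive v).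
have i0 : 'I_(size (reps act)) by rewrite size_reps; exact: ord0.
have rep_i0 : rep i0 = u.
  rewrite /rep (tnth_nth u) /=; case: i0 => k /=.
  by rewrite (reps_transitive v); case: k.
rewrite /gamma (det_dim1 _ i0 size_reps) !mxE rep_i0 eqxx mulr1n.
rewrite hornerD hornerN hornerC mulrC hornerMX hornerC mulr1 vorbitT.
by under eq_bigl => e do rewrite inE andbT.
Qed.

End GammaTransitive.

Lemma qV_of_rep (G : finGroupType) (H : {group G}) (T : finType)
    (act : G -> T -> T) (S : qV H act) :
  qV_of H act (qV_rep S) = S.
Proof. by apply: val_inj; apply/esym/eqP; exact: (xchooseP (elimT existsP (valP S))). Qed.

Lemma qE_repE (G : finGroupType) (H : {group G}) (T : finType)
    (act : G -> T -> T) (C : qE H act) :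
  qE_rep C = qV_rep (C : qV H act).
Proof. by []. Qed.

Section DerivedQuotient.
Variables (G : finGroupType) (H : {group G}).
Hypothesis cG : forall x y : G, (x * y = y * x)%g.

Lemma abelian_norm x : x \in 'N(H)%g.
Proof.
have abG : abelian [set: G] by apply/centsP => a _ b _; exact: cG.
exact: subsetP (sub_abelian_norm abG (subsetT H)) x (in_setT x).
Qed.

Lemma cosetM x y : coset H (x * y)%g = (coset H x * coset H y)%g.
Proof. by rewrite morphM ?abelian_norm. Qed.

Lemma cosetMC x y : coset H (x * y)%g = (coset H y * coset H x)%g.
Proof. by rewrite -cosetM cG. Qed.

Lemma sum_coset (R : nmodType) (F : coset_of H -> R) :
  \sum_(x : G) F (coset H x) = (\sum_(c : coset_of H) F c) *+ #|H|.
Proof.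
rewrite -sumrMnl (partition_big (coset H) xpredT) //=; apply: eq_bigr => c _.
have [x _ ->] := cosetP c.
rewrite (eq_bigr (fun _ => F (coset H x))) => [|y /eqP -> //].
rewrite (eq_bigl (mem (H :* x)%g)) => [|y]; last first.
  exact/eqP/(rcoset_kercosetP (abelian_norm y) (abelian_norm x)).
by rewrite sumr_const card_rcoset.
Qed.

Section Translation.
Variables (T : finType) (act : G -> T * G -> T * G).
Hypothesis act_translate : forall s x, act s x = (x.1, s * x.2)%g.

Lemma qV_of_pair_eq a a' d d' :
  qV_of H act (a, d) = qV_of H act (a', d') <-> a = a' /\ coset H d = coset H d'.
Proof.
split=> [/(congr1 val) /= orb_eq | [<- /rcoset_kercosetP]].
  have : (a, d) \in horb H act (a', d').
    by rewrite -orb_eq; apply/imsetP; exists 1%g; rewrite ?act_translate ?mul1g.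
  by case/imsetP => h hH; rewrite act_translate => -[-> ->]; rewrite coset_kerl.
case/(_ (abelian_norm _) (abelian_norm _)) /rcosetP => h hH ->.
apply: val_inj; apply/setP => z; apply/imsetP/imsetP => -[k kH ->].
  by exists (k * h)%g; rewrite ?groupM // !act_translate mulgA.
by exists (k * h^-1)%g; rewrite ?groupM ?groupV // !act_translate /= mulgA mulgKV.
Qed.

Lemma qV_rep_of_pair a d :
  (qV_rep (qV_of H act (a, d))).1 = a /\
  coset H (qV_rep (qV_of H act (a, d))).2 = coset H d.
Proof.
have := qV_of_rep (qV_of H act (a, d)).
by case: (qV_rep _) => a' d' /qV_of_pair_eq.
Qed.

End Translation.

Variables (VX EX : finType) (oX tX : EX -> VX) (alpha : EX -> G).

Local Notation actV := (@der_actV VX G).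
Local Notation actE := (@der_actE EX G).
Local Notation vertex := (qV_of H actV).
Local Notation edge := (qV_of H actE).
Local Notation qo := (q_o (@der_o VX EX oX G) actV).
Local Notation qt := (q_t (der_t tX alpha) actV).

Lemma q_o_edge e d : qo (edge (e, d)) = vertex (oX e, d).
Proof.
rewrite /q_o qE_repE; have [] := qV_rep_of_pair (act := actE) (fun _ _ => erefl) e d.
by case: (qV_rep _) => e' d' /= -> coset_d'; apply/qV_of_pair_eq.
Qed.

Lemma q_t_edge e d : qt (edge (e, d)) = vertex (tX e, d * alpha e)%g.
Proof.
rewrite /q_t qE_repE; have [] := qV_rep_of_pair (act := actE) (fun _ _ => erefl) e d.
case: (qV_rep _) => e' d' /= -> coset_d'; apply/qV_of_pair_eq => //; split=> //.
by rewrite /= !cosetM coset_d'.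
Qed.

Lemma q_actV_vertex c a d :
  q_actV c (vertex (a, d)) = vertex (a, repr c * d)%g.
Proof.
rewrite /q_actV; have [] := qV_rep_of_pair (act := actV) (fun _ _ => erefl) a d.
case: (qV_rep _) => a' d' /= -> coset_d'; apply/qV_of_pair_eq => //; split=> //.
by rewrite !cosetM coset_d'.
Qed.

Lemma vertexP (S : qV H actV) : exists a d, S = vertex (a, d).
Proof. by exists (qV_rep S).1, (qV_rep S).2; rewrite -surjective_pairing qV_of_rep. Qed.

Lemma q_actV_free c c' (S : qV H actV) : q_actV c S = q_actV c' S -> c = c'.
Proof.
have [a [d ->]] := vertexP S; rewrite !q_actV_vertex => /qV_of_pair_eq [] // _.
rewrite !cosetM !coset_reprK; exact: mulIg.
Qed.

Lemma q_actV_fiber_transitive a d d' :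
  exists c, q_actV c (vertex (a, d)) = vertex (a, d').
Proof.
exists (coset H (d' * d^-1)); rewrite q_actV_vertex; apply/qV_of_pair_eq => //.
by split=> //; rewrite (cosetM (repr _)) coset_reprK -cosetM mulgKV.
Qed.

Lemma sum_q_o_vertex (R : nmodType) (F : qV H actE -> R) a d :
  \sum_(C | qo C == vertex (a, d)) F C = \sum_(e | oX e == a) F (edge (e, d)).
Proof.
rewrite (reindex_onto (fun e => edge (e, d)) (fun C => (qV_rep C).1)) /=.
  apply: eq_bigl => e; rewrite q_o_edge.
  have [-> _] := qV_rep_of_pair (act := actE) (fun _ _ => erefl) e d.
  by rewrite eqxx andbT; apply/eqP/eqP => [/qV_of_pair_eq [] | ->].
move=> C /eqP; rewrite -[C in qo C]qV_of_rep => qoC; rewrite -[RHS]qV_of_rep; move: qoC.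
case: (qV_rep C) => e' d' /=; rewrite q_o_edge => /qV_of_pair_eq [] // _ coset_d'.
by apply/qV_of_pair_eq.
Qed.

Lemma coef_q_t_loop e d : tX e = oX e ->
  coef (@q_actV G H _ actV) (qt (edge (e, d))) (vertex (oX e, d)) = coset H (alpha e).
Proof.
move=> loop_e.
have -> : qt (edge (e, d)) = q_actV (coset H (alpha e)) (vertex (oX e, d)).
  rewrite q_t_edge q_actV_vertex loop_e; apply/qV_of_pair_eq => //; split=> //.
  by rewrite (cosetM (repr _)) coset_reprK -cosetMC.
by apply: coef_free; exact: q_actV_free.
Qed.

End DerivedQuotient.

Lemma card_ord_gt0_le n (i : 'I_n) : #|[pred k : 'I_n | 0 < k <= i]%N| = i.
Proof.
rewrite -sum1_card -(big_mkord (fun k => 0 < k <= i)%N (fun _ => 1%N)) sum1_count /=.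
case: i => m /= /subnKC <-.
rewrite /index_iota subn0 iotaD count_cat /=.
rewrite (@eq_in_count _ _ predT (iota 1 m)); last by move=> k; rewrite mem_iota /=; lia.
rewrite (@eq_in_count _ _ pred0 (iota (0 + m.+1) _)); last by move=> k; rewrite mem_iota /=; lia.
by rewrite count_predT count_pred0 size_iota addn0.
Qed.

Lemma sum_triangle (R : nmodType) n (F : 'I_n -> R) :
  \sum_(x : {ik : 'I_n * 'I_n | (0 < ik.2)%N && (ik.2 <= ik.1)%N}) F (val x).1 =
  \sum_(i : 'I_n) F i *+ i.
Proof.
rewrite -[LHS](big_sub [pred ik : 'I_n * 'I_n | (0 < ik.2)%N && (ik.2 <= ik.1)%N]
                     (fun ik => F ik.1)) /=.
rewrite -(pair_big_dep xpredT (fun i k : 'I_n => (0 < k <= i)%N) (fun i _ => F i)) /=.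
by apply: eq_bigr => i _; rewrite sumr_const card_ord_gt0_le.
Qed.

Lemma sum_mulrn_pairing (R : nmodType) (T : finType) (f : T -> T) (w : T -> nat)
    (n : nat) (F : T -> R) :
  injective f -> (forall x, F (f x) = F x) -> (forall x, w x + w (f x) = n)%N ->
  (\sum_x F x *+ w x) *+ 2 = (\sum_x F x) *+ n.
Proof.
move=> f_inj Ff wf; rewrite mulr2n {2}(reindex_inj f_inj) -big_split -sumrMnl /=.
by apply: eq_bigr => x _; rewrite Ff -mulrnDr wf.
Qed.

Lemma ffun_pmulrnI (T : finType) (R : numDomainType) n (a b : {ffun T -> R}) :
  (0 < n)%N -> a *+ n = b *+ n -> a = b.
Proof.
move=> n_gt0 /ffunP anbn; apply/ffunP => x.
by apply: (pmulrnI n_gt0); rewrite -!ffunMnE anbn.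
Qed.

Section Delta.
Variable p : nat.
Hypothesis p_prime : prime p.

Lemma Delta_comm (x y : Delta p) : (x * y = y * x)%g.
Proof. by apply: val_inj; rewrite !FinRing.val_unitM mulrC. Qed.

Definition residue (d : Delta p) : nat := val (val d).

Lemma residue_ltp d : (residue d < p)%N.
Proof. by rewrite /residue -[X in (_ < X)%N](Fp_cast p_prime) ltn_ord. Qed.

Lemma natr_residue d : (residue d)%:R = val d.
Proof. by apply: val_inj; rewrite [LHS]val_Fp_nat // modn_small ?residue_ltp. Qed.

Lemma residue_gt0 d : (0 < residue d)%N.
Proof.
rewrite lt0n; apply/eqP => res0; have := valP d.
by rewrite -natr_residue res0 unitr0.
Qed.

Lemma val_sigma i : (0 < i < p)%N -> val (sigma p i) = i%:R.
Proof.
move=> /andP[i_gt0 i_ltp]; rewrite /sigma val_insubd unitfE.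
by rewrite -(dvdn_pcharf (pchar_Fp p_prime)) gtnNdvd.
Qed.

Lemma sigma_residue d : sigma p (residue d) = d.
Proof. by apply: val_inj; rewrite val_sigma ?natr_residue ?residue_gt0 ?residue_ltp. Qed.

Lemma residue_sigma i : (0 < i < p)%N -> residue (sigma p i) = i.
Proof.
move=> i_range; have /andP[_ i_ltp] := i_range.
by rewrite -[RHS](modn_small i_ltp) -val_Fp_nat // -val_sigma.
Qed.

Lemma sigma1 : sigma p 1 = 1%g.
Proof. by apply: val_inj; rewrite val_sigma // prime_gt1. Qed.

Lemma val_jconj : val (jconj p) = -1.
Proof.
have p_gt1 := prime_gt1 p_prime.
rewrite val_sigma; last by lia.
apply/eqP; rewrite -subr_eq0 opprK natr1 prednK ?pchar_Fp_0 //; exact: ltnW.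
Qed.

Lemma residue_Mjconj d : (residue d + residue (d * jconj p)%g)%N = p.
Proof.
have : (p %| residue d + residue (d * jconj p)%g)%N.
  by rewrite (dvdn_pcharf (pchar_Fp p_prime)) natrD !natr_residue
             FinRing.val_unitM val_jconj mulrN1 subrr.
case/dvdnP => k; have := residue_ltp d; have := residue_ltp (d * jconj p)%g.
have := residue_gt0 d; have := residue_gt0 (d * jconj p)%g.
by case: k => [|[|k]]; lia.
Qed.

Hypothesis p_odd : odd p.

Lemma jconj_neq1 : jconj p != 1%g.
Proof.
apply/eqP => /(congr1 val); rewrite val_jconj /= => m1_eq1.
have : (p %| 2)%N by rewrite (dvdn_pcharf (pchar_Fp p_prime)) mulr2n -{1}m1_eq1 addNr.
by rewrite dvdn_prime2 // => /eqP p2; move: p_odd; rewrite p2.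
Qed.

Lemma card_Jgrp : #|Jgrp p| = 2%N.
Proof.
rewrite -orderE; apply/prime_nt_dvdP; rewrite ?order_eq1 ?jconj_neq1 //.
rewrite order_dvdn; apply/eqP/val_inj.
by rewrite FinRing.val_unitX val_jconj /= expr2 mulrNN mulr1.
Qed.

Lemma sum_alphaX (R : nmodType) (F : Delta p -> R) :
  \sum_(e : XE p) F (alphaX e) = F 1%g + \sum_(d : Delta p) F d^-1%g *+ residue d.
Proof.
rewrite (bigD1 None) //= sigma1; congr (_ + _).
rewrite (reindex_omap Some id) => [|[]] //=.
rewrite (eq_bigl xpredT) => [|x]; last by rewrite eqxx.
rewrite (sum_triangle (fun i => F (sigma p i)^-1%g)).
rewrite (bigID (fun i : 'I_p => 0 < i)%N) /= [X in _ + X]big1 ?addr0 => [|i]; last first.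
  by rewrite lt0n negbK => /eqP ->.
rewrite (reindex_onto (fun d => Ordinal (residue_ltp d)) (fun i => sigma p i)) /=.
  by apply: eq_big => d; rewrite residue_gt0 sigma_residue ?eqxx.
by move=> i i_gt0; apply: val_inj; rewrite /= residue_sigma // i_gt0 ltn_ord.
Qed.

Local Notation cK := (@DeltaPlus_comm p).

Lemma sum_coset_alphaX :
  \sum_(e : XE p) grelt cK (coset (Jgrp p) (alphaX e)) = 1 + grnorm cK *+ p.
Proof.
rewrite (sum_alphaX (fun d => grelt cK (coset (Jgrp p) d))) morph1; congr (_ + _).
have coset_invMj d : grelt cK (coset (Jgrp p) (d * jconj p)^-1) =
                     grelt cK (coset (Jgrp p) d^-1).
  by rewrite invMg coset_kerl // groupV cycle_id.
have sum_coset_inv : \sum_(d : Delta p) grelt cK (coset (Jgrp p) d^-1) = grnorm cK *+ 2.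
  rewrite (reindex_inj invg_inj); under eq_bigr => d _ do rewrite /= invgK.
  by rewrite (sum_coset Delta_comm) card_Jgrp.
apply: (@ffun_pmulrnI _ _ 2) => //.
by rewrite (sum_mulrn_pairing (mulIg _) coset_invMj residue_Mjconj) sum_coset_inv mulrnAC.
Qed.

End Delta.

Lemma Yplus_act_transitive p (S T : YplusV p) : exists c, Yplus_act c S = T.
Proof.
have [[] [d ->]] := vertexP S; have [[] [d' ->]] := vertexP T.
exact: (q_actV_fiber_transitive (Jgrp p) (@Delta_comm p) tt d d').
Qed.

Theorem proposition5p3 (p : nat) (p_prime : prime p) (p_odd : odd p) :
  (gamma_YplusX p).[1] = - (p%:R * grnorm (@DeltaPlus_comm p)).
Proof.
pose S0 := qV_of (Jgrp p) (@Y_actV p) (tt, 1%g).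
rewrite /gamma_YplusX (gamma_horner1_transitive _ _ _ (@Yplus_act_transitive p) S0).
have [[] [d ->]] := vertexP (orbit_rep (@Yplus_act p) S0).
rewrite /Yplus_o /Y_o (sum_q_o_vertex (@Delta_comm p)).
under eq_bigr => e _ do rewrite (coef_q_t_loop _ (@Delta_comm p)) //.
by rewrite sum_coset_alphaX // opprD addrA subrr add0r mulr_natl.
Qed.
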